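(* If $\rho_1$ and $\rho_2$ are radius functions on $\mathbb{R}^d$, then $\rho_1\vee\rho_2:=\max\{\rho_1,\rho_2\}$ is a radius function.
   Context: A radius function is a Borel function $\rho:\mathbb{R}^d\to(0,\infty)$ for which there is a constant $C<\infty$ such that $C^{-1}\rho(x)\le\rho(y)\le C\rho(x)$ for all $x\in\mathbb{R}^d$ and all $y\in B(x,\rho(x))$ (Euclidean open ball). *)

From HB Require Import structures.
From mathcomp Require Import all_boot all_order all_algebra.
From mathcomp Require Import all_classical all_reals all_analysis.
Set Implicit Arguments. Unset Strict Implicit. Unset Printing Implicit Defensive.
Import Order.TTheory GRing.Theory Num.Theory numFieldNormedType.Exports.
Local Open Scope classical_set_scope.
Local Open Scope ring_scope.

(* R^d is modelled as row vectors 'rV[R]_d. *)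

Definition enorm (R : realType) (d : nat) (x : 'rV[R]_d) : R :=
  Num.sqrt (\sum_(i < d) x ord0 i ^+ 2).

Definition eball (R : realType) (d : nat) (x : 'rV[R]_d) (r : R) : set 'rV[R]_d :=
  [set y | enorm (y - x) < r].

(* Borel sets of R^d: the sigma-algebra generated by the open sets of the
   (product = Euclidean) topology of 'rV[R]_d. *)
Definition borel_set (R : realType) (d : nat) (A : set 'rV[R]_d) : Prop :=
  <<s [set U : set 'rV[R]_d | open U] >> A.

Definition borel_fun (R : realType) (d : nat) (f : 'rV[R]_d -> R) : Prop :=
  forall B : set R, measurable B -> borel_set (f @^-1` B).

Definition radius_function (R : realType) (d : nat) (rho : 'rV[R]_d -> R) : Prop :=
  borel_fun rho /\ (forall x, 0 < rho x) /\
  exists C : R, 0 < C /\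
    forall x y, eball x (rho x) y -> C^-1 * rho x <= rho y /\ rho y <= C * rho x.

From HB Require Import structures.
From mathcomp Require Import all_boot all_order all_algebra.
From mathcomp Require Import all_classical all_reals all_analysis.
From mathcomp Require Import measurable_realfun.
Import Order.TTheory GRing.Theory Num.Theory numFieldNormedType.Exports.
Set Implicit Arguments. Unset Strict Implicit. Unset Printing Implicit Defensive.
Local Open Scope ring_scope.

(* Enlarge both constants to a common C >= 1 and suppose rho1 x >= rho2 x, so
   that B(x, max) = B(x, rho1 x).  For y in this ball, rho1 y already gives the
   lower bound and controls itself from above.  For rho2 y there are two cases:
   either x lies in B(y, rho2 y), and then the lower bound of rho2 at y gives
   rho2 y <= C rho2 x <= C rho1 x; or rho2 y <= |y - x| < rho1 x. *)

Section MaxRadiusFunction.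

Variables (R : realType) (d : nat).
Implicit Types (rho r s : 'rV[R]_d -> R) (x y : 'rV[R]_d) (C D : R).

Definition radius_bound C rho :=
  forall x y, eball x (rho x) y -> C^-1 * rho x <= rho y /\ rho y <= C * rho x.

Lemma borel_fun_max (f g : 'rV[R]_d -> R) :
  borel_fun f -> borel_fun g -> borel_fun (fun x => Num.max (f x) (g x)).
Proof.
pose G := [set U : set 'rV[R]_d | open U]%classic.
have borel_measurable h : borel_fun h ->
    measurable_fun (setT : set (g_sigma_algebraType G)) h.
  by move=> hB _ B mB; rewrite setTI; exact: hB.
move=> /borel_measurable mf /borel_measurable mg B mB.
by have := measurable_maxr mf mg measurableT mB; rewrite setTI.
Qed.

Lemma eball_sym x y (e : R) : eball x e y -> eball y e x.
Proof.
rewrite /eball /enorm /=; congr (Num.sqrt _ < e); apply: eq_bigr => i _.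
by rewrite !mxE -sqrrN opprB.
Qed.

Lemma radius_bound_widen C D rho : (forall x, 0 < rho x) ->
  0 < C -> C <= D -> radius_bound C rho -> radius_bound D rho.
Proof.
move=> rho_gt0 C_gt0 CD hrho x y /hrho [lo hi].
have rx_ge0 := ltW (rho_gt0 x).
split; [apply: le_trans lo | apply: le_trans hi _]; apply: ler_wpM2r => //.
by rewrite lef_pV2 ?posrE // (lt_le_trans C_gt0).
Qed.

Lemma radius_bound_swap C rho : (forall x, 0 < rho x) -> 0 < C ->
  radius_bound C rho -> forall x y, eball y (rho y) x -> rho y <= C * rho x.
Proof.
move=> rho_gt0 C_gt0 hrho x y /hrho [lo _].
by rewrite -ler_pdivrMl.
Qed.

Lemma radius_bound_max_dominant C r s :
    (forall x, 0 < r x) -> (forall x, 0 < s x) -> 1 <= C ->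
    radius_bound C r -> radius_bound C s ->
  forall x y, s x <= r x -> eball x (r x) y ->
    C^-1 * r x <= Num.max (r y) (s y) /\ Num.max (r y) (s y) <= C * r x.
Proof.
move=> r_gt0 s_gt0 C_ge1 hr hs x y sr xy.
have C_gt0 : 0 < C by apply: lt_le_trans C_ge1.
have [lo hi] := hr x y xy.
split; first by rewrite le_max lo.
rewrite ge_max hi /=.
have [yx | ] := ltP (enorm (y - x)) (s y).
  apply: le_trans (radius_bound_swap s_gt0 C_gt0 hs (eball_sym yx)) _.
  by rewrite ler_pM2l.
move=> sy_le; apply: le_trans sy_le (le_trans (ltW xy) _).
by rewrite ler_peMl // ltW.
Qed.

Lemma radius_bound_max C r s :
    (forall x, 0 < r x) -> (forall x, 0 < s x) -> 1 <= C ->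
    radius_bound C r -> radius_bound C s ->
  radius_bound C (fun x => Num.max (r x) (s x)).
Proof.
move=> r_gt0 s_gt0 C_ge1 hr hs x y /=.
have [sr | /ltW rs] := leP (s x) (r x).
  exact: (radius_bound_max_dominant r_gt0 s_gt0 C_ge1 hr hs sr).
rewrite ![Num.max (r _) _]maxC.
exact: (radius_bound_max_dominant s_gt0 r_gt0 C_ge1 hs hr rs).
Qed.

End MaxRadiusFunction.

Theorem mainTheorem7 (R : realType) (d : nat) (rho1 rho2 : 'rV[R]_d -> R) :
  radius_function rho1 -> radius_function rho2 ->
  radius_function (fun x => Num.max (rho1 x) (rho2 x)).
Proof.
move=> [b1 [p1 [C1 [C1_gt0 h1]]]] [b2 [p2 [C2 [C2_gt0 h2]]]].
split; first exact: borel_fun_max.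
split; first by move=> x; rewrite lt_max p1.
pose C := Num.max 1 (Num.max C1 C2).
have C_ge1 : 1 <= C by rewrite le_max lexx.
have C1_le : C1 <= C by rewrite !le_max lexx orbT.
have C2_le : C2 <= C by rewrite !le_max lexx !orbT.
exists C; split; first exact: lt_le_trans C_ge1.
apply: radius_bound_max => //.
- exact: radius_bound_widen h1.
- exact: radius_bound_widen h2.
Qed.
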